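(* Let $G$ be a graph all of whose internal vertices are of type $0$ or $1$, and let $n_0$ denote the maximum number of vertices of a connected component of $G_0$ (with $n_0=0$ if $G_0$ is the null graph). Then: (1) $G$ is well-covered if and only if $G_0$ is well-covered and for every independent set $I$ in $G_1$ of size at most $n_0$ we have $i(G_0-N(I))=\alpha(G_0)$; (2) $\mu_\alpha(G)\leq 1$ if and only if $\mu_\alpha(G_0)\leq 1$ and for every independent set $I$ in $G_1$ of size at most $2n_0$ we have $\alpha(G_0)-i(G_0-N(I))\leq 1$.
   Context: All graphs are finite and simple; the null graph is allowed. For a graph $F$, $\alpha(F)$ is the maximum size of an independent set, $i(F)$ the minimum size of an inclusion-maximal independent set (both $0$ for the null graph), $\mu_\alpha(F)=\alpha(F)-i(F)$, and $F$ is well-covered if $\mu_\alpha(F)=0$. $N(I)=\bigcup_{v\in I}N(v)$ and $G_0-N(I)$ is obtained from $G_0$ by deleting the vertices of $N(I)$. Types of vertices: let $U$ be the set of vertices of $G$ whose connected component is a complete graph. In $G-U$, vertices of degree $1$ are leaves and the others are internal vertices. An internal vertex adjacent to exactly $k$ leaves is of type $k$; every vertex of $U$ is of type $0$. $G_i$ denotes the subgraph of $G$ induced by all vertices of type $i$. *)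

(* A simple graph G is a symmetric irreflexive relation e on a finType T.
   Induced subgraphs are represented by their vertex sets V : {set T}. *)
From mathcomp Require Import all_boot.
Set Implicit Arguments. Unset Strict Implicit. Unset Printing Implicit Defensive.

Section Graph.
Variables (T : finType) (e : rel T).

Definition indep (S : {set T}) : bool :=
  [forall x in S, forall y in S, ~~ e x y].

Definition alpha (V : {set T}) : nat :=
  \max_(S : {set T} | (S \subset V) && indep S) #|S|.

Definition maxindep (V S : {set T}) : bool :=
  [&& S \subset V, indep S & [forall x in V :\: S, ~~ indep (x |: S)]].

(* i of the subgraph induced by V (minimum size of a maximal independent set;
   #|V| is only a neutral upper bound, a maximal independent set always exists) *)
Definition imin (V : {set T}) : nat :=
  \big[minn/#|V|]_(S : {set T} | maxindep V S) #|S|.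

Definition mu_alpha (V : {set T}) : nat := alpha V - imin V.

Definition well_covered (V : {set T}) : Prop := mu_alpha V = 0.

Definition nbhd (I : {set T}) : {set T} := [set y | [exists x in I, e x y]].

(* U : vertices whose connected component (in G) is a complete graph *)
Definition Uset : {set T} :=
  [set v | [forall x, forall y,
     (connect e v x && connect e v y && (x != y)) ==> e x y]].

Definition degGU (v : T) : nat := #|[set u | e v u & u \notin Uset]|.

Definition leaf (v : T) : bool := (v \notin Uset) && (degGU v == 1).
Definition internal (v : T) : bool := (v \notin Uset) && (degGU v != 1).

Definition nleaves (v : T) : nat := #|[set u | e v u & leaf u]|.

Definition type_set (k : nat) : {set T} :=
  [set v | (internal v && (nleaves v == k)) || ((k == 0) && (v \in Uset))].

Definition induced (V : {set T}) : rel T :=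
  fun x y => [&& e x y, x \in V & y \in V].

Definition max_comp (V : {set T}) : nat :=
  \max_(x in V) #|[set y in V | connect (induced V) x y]|.

End Graph.

(* Every vertex of G lies in G0, lies in G1 or is a leaf; each vertex of G1 carries exactly
   one pendant leaf and no leaf touches G0.  Sending a leaf to its parent therefore embeds the
   part of an independent set outside G0 into G1, bijectively for a maximal one.  The maximal
   independent sets of G are exactly the sets I ∪ J ∪ {leaves whose parent is not in I} with
   I ⊆ G1 independent and J maximal independent in G0 - N(I); hence α(G) = |G1| + α(G0), and
   μ_α(G) ≤ k iff α(G0) ≤ |J| + k for all such I and J.
   To bound |I|, compare J with a maximum independent set K of G0 component by component: if
   |K| ≥ |J| + k + 1, then at most k + 1 components of G0 already carry this deficit, and
   keeping one neighbour in I for each of their vertices in N(I) gives I' ⊆ I with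
   |I'| ≤ (k + 1) n0 and i(G0 - N(I')) ≤ α(G0) - (k + 1). *)

From HB Require Import structures.
From mathcomp Require Import all_boot zify.
Set Implicit Arguments. Unset Strict Implicit. Unset Printing Implicit Defensive.

(* minn has no unit on nat; this AC-law instance is what lets big_rem_AC isolate one term
   of the \big[minn/_] defining imin. *)
HB.instance Definition _ := SemiGroup.isComLaw.Build nat minn minnA minnC.

Section Graph.
Variables (T : finType) (e : rel T).
Hypotheses (sym_e : symmetric e) (irr_e : irreflexive e).
Implicit Types (A B C I J K S V W X : {set T}) (u v x y l : T).

(** * Independent sets *)

Lemma indepP S : reflect (forall x y, x \in S -> y \in S -> ~~ e x y) (indep e S).
Proof.
apply: (iffP forall_inP) => [h x y xS | h x xS]; first by move/forall_inP: (h x xS); apply.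
by apply/forall_inP => y; apply: h.
Qed.

Lemma indep_subset A S : A \subset S -> indep e S -> indep e A.
Proof. by move=> /subsetP AS /indepP iS; apply/indepP => x y /AS xS /AS; apply: iS. Qed.

Lemma indep0 : indep e set0.
Proof. by apply/indepP => x y; rewrite in_set0. Qed.

Lemma indepU A B : indep e A -> indep e B ->
  (forall x y, x \in A -> y \in B -> ~~ e x y) -> indep e (A :|: B).
Proof.
move=> /indepP iA /indepP iB nAB; apply/indepP => x y /setUP[xA|xB] /setUP[yA|yB].
- exact: iA.
- exact: nAB.
- by rewrite sym_e nAB.
- exact: iB.
Qed.

Lemma leq_card_alpha V S : S \subset V -> indep e S -> #|S| <= alpha e V.
Proof. by move=> SV iS; apply: (leq_bigmax_cond S); rewrite SV iS. Qed.

Lemma alpha_attained V : exists S, [/\ S \subset V, indep e S & #|S| = alpha e V].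
Proof.
have : 0 < #|[pred S : {set T} | (S \subset V) && indep e S]|.
  by apply/card_gt0P; exists set0; rewrite inE sub0set indep0.
by case/(eq_bigmax_cond (fun S : {set T} => #|S|)) => S /andP[SV iS] alphaE; exists S.
Qed.

Lemma alphaS V A : A \subset V -> alpha e A <= alpha e V.
Proof.
move=> AV; have [S [SA iS <-]] := alpha_attained A.
by apply: leq_card_alpha iS; apply: subset_trans AV.
Qed.

Lemma maxindepP V S :
  reflect [/\ S \subset V, indep e S &
             forall x, x \in V -> x \notin S -> exists2 y, y \in S & e x y]
          (maxindep e V S).
Proof.
apply: (iffP and3P) => -[SV iS domS]; split=> //.
  move=> x xV xS; have /forall_inP/(_ x) := domS; rewrite inE xS xV => /(_ isT).
  have [//|nodom /negP[]] := @exists_inP _ (mem S) (e x).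
  rewrite indepU //; first by apply/indepP => y z /set1P-> /set1P->; rewrite irr_e.
  by move=> _ y /set1P-> yS; apply/negP => exy; apply: nodom; exists y.
apply/forall_inP => x; rewrite inE => /andP[xS xV]; have [y yS exy] := domS x xV xS.
by apply/negP => /indepP/(_ x y); rewrite setU11 setU1r // exy => /(_ isT isT).
Qed.

Lemma maximum_maxindep V S :
  S \subset V -> indep e S -> #|S| = alpha e V -> maxindep e V S.
Proof.
move=> SV iS cardS; apply/and3P; split=> //; apply/forall_inP => x.
rewrite inE => /andP[xS xV]; apply/negP => iU.
have := leq_card_alpha (_ : x |: S \subset V) iU.
by rewrite subUset sub1set xV SV cardsU1 xS cardS ltnn => /(_ isT).
Qed.

Lemma maxindep_exists V : exists S, maxindep e V S.
Proof. by have [S [SV iS cardS]] := alpha_attained V; exists S; apply: maximum_maxindep. Qed.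

Lemma imin_leq V S : maxindep e V S -> imin e V <= #|S|.
Proof. by move=> mS; rewrite /imin (big_rem_AC _ _ _ _ (mem_index_enum S)) mS geq_minl. Qed.

Lemma imin_attained V : exists2 S, maxindep e V S & #|S| = imin e V.
Proof.
have : imin e V = #|V| \/ exists2 S, maxindep e V S & imin e V = #|S|.
  apply: (big_ind (fun m => m = #|V| \/ exists2 S, maxindep e V S & m = #|S|)).
  - by left.
  - by move=> m n Km Kn; rewrite /minn; case: ifP.
  - by move=> S mS; right; exists S.
case=> [iminV|[S mS ->]]; last by exists S.
have [S mS] := maxindep_exists V; exists S => //; apply/eqP; rewrite eqn_leq imin_leq //.
by rewrite iminV subset_leq_card //; case/and3P: mS.
Qed.

Lemma imin_le_alpha V : imin e V <= alpha e V.
Proof. by have [S /and3P[SV iS _] <-] := imin_attained V; apply: leq_card_alpha. Qed.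

Lemma nbhd0 : nbhd e set0 = set0.
Proof. by apply/setP => x; rewrite !inE; apply/existsP => -[y]; rewrite in_set0. Qed.

(** * Connected components of an induced subgraph *)

Lemma closedU (r : rel T) A B : closed r A -> closed r B -> closed r (A :|: B).
Proof. by move=> cA cB x y rxy; rewrite !inE (cA _ _ rxy) (cB _ _ rxy). Qed.

Lemma closedD (r : rel T) A B : closed r A -> closed r B -> closed r (A :\: B).
Proof. by move=> cA cB x y rxy; rewrite !inE (cA _ _ rxy) (cB _ _ rxy). Qed.

Lemma cardsI_split A B C : B \subset C -> #|A :&: C| = #|A :&: B| + #|A :&: (C :\: B)|.
Proof. by move=> BC; rewrite -(cardsID B (A :&: C)) -setIA (setIidPr BC) setIDA. Qed.

Lemma nbhd_trace I W :
  exists I', [/\ I' \subset I, #|I'| <= #|W| & nbhd e I' :&: W = nbhd e I :&: W].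
Proof.
pose g w := odflt w [pick y in I | e y w].
have gP w : w \in nbhd e I -> g w \in I /\ e (g w) w.
  rewrite inE /g => /exists_inP[y yI eyw].
  by case: pickP => [z /andP[]|/(_ y)] //=; rewrite yI eyw.
set I' := g @: (nbhd e I :&: W).
have I'I : I' \subset I by apply/subsetP => _ /imsetP[w /setIP[wN _] ->]; case: (gP w wN).
exists I'; split=> //.
  exact: leq_trans (leq_imset_card _ _) (subset_leq_card (subsetIr _ _)).
apply/setP => w; rewrite !in_setI; apply: andb_id2r => wW; apply/idP/idP.
  by rewrite !inE => /exists_inP[y /(subsetP I'I) yI eyw]; apply/exists_inP; exists y.
move=> wN; rewrite inE; apply/exists_inP; exists (g w); last by case: (gP w wN).
by apply/imsetP; exists w; rewrite // in_setI wN.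
Qed.

Section Components.
Variable V0 : {set T}.
Local Notation r := (induced e V0).
Local Notation n0 := (max_comp e V0).

Definition component x := [set y in V0 | connect r x y].

Lemma induced_sym : symmetric r.
Proof. by move=> x y; rewrite /induced sym_e [(x \in V0) && _]andbC. Qed.

Lemma closed_component x : closed r (component x).
Proof.
move=> y z ryz; have /and3P[_ yV zV] := ryz; rewrite !inE yV zV.
exact: (connect_closed (sym_connect_sym induced_sym)) ryz.
Qed.

Lemma component_sub x W : closed r W -> x \in W -> component x \subset W.
Proof. by move=> cW xW; apply/subsetP => y /setIdP[_ /(closed_connect cW)<-]. Qed.

Lemma mem_component x : x \in V0 -> x \in component x.
Proof. by move=> xV; rewrite inE xV connect0. Qed.

Lemma card_component x : x \in V0 -> #|component x| <= n0.
Proof. by move=> xV; apply: (leq_bigmax_cond x). Qed.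

Lemma closed_no_edge W x y :
  closed r W -> x \in V0 -> y \in V0 -> x \in W -> y \notin W -> ~~ e x y.
Proof.
move=> cW xV yV xW; apply: contraNN => exy.
by rewrite -(cW x y) // /induced exy xV yV.
Qed.

Lemma positive_component J K W : closed r W -> W \subset V0 ->
  #|J :&: W| < #|K :&: W| ->
  exists2 x, x \in W & #|J :&: component x| < #|K :&: component x|.
Proof.
move: {2}#|W| (leqnn #|W|) => n; elim: n W => [|n IH] W cardW cW WV defW.
  by move: cardW defW; rewrite leqn0 cards_eq0 => /eqP->; rewrite !setI0 cards0.
have [W0|[x xW]] := set_0Vmem W; first by move: defW; rewrite W0 !setI0 cards0.
have CW := component_sub cW xW; have xC := mem_component (subsetP WV x xW).
have [|defC] := ltnP #|J :&: component x| #|K :&: component x|; first by exists x.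
have cardWC : #|W :\: component x| <= n.
  have : 0 < #|component x| by apply/card_gt0P; exists x.
  by rewrite cardsD (setIidPr CW); lia.
have cWC := closedD cW (closed_component x).
have WCV := subset_trans (subsetDl W (component x)) WV.
have defWC : #|J :&: (W :\: component x)| < #|K :&: (W :\: component x)|.
  by move: defW; rewrite (cardsI_split J CW) (cardsI_split K CW); lia.
by have [y /setDP[yW _]] := IH _ cardWC cWC WCV defWC; exists y.
Qed.

Lemma small_deficit_set J K j W : closed r W -> W \subset V0 ->
  #|J :&: W| + j <= #|K :&: W| ->
  exists W', [/\ closed r W', W' \subset W, #|W'| <= j * n0 &
                #|J :&: W'| + j <= #|K :&: W'|].
Proof.
elim/ltn_ind: j W => j IH W cW WV defW.
have [j0|j_gt0] := posnP j.
  by exists set0; rewrite j0 !setI0 cards0 sub0set; split=> // x y; rewrite !inE.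
have [x xW defC] : exists2 x, x \in W & #|J :&: component x| < #|K :&: component x|.
  by apply: positive_component cW WV _; lia.
set C := component x in defC *; have CW : C \subset W := component_sub cW xW.
have cardC : #|C| <= n0 := card_component (subsetP WV x xW).
have [bigC|smallC] := leqP (#|J :&: C| + j) #|K :&: C|.
  by exists C; split=> //; [apply: closed_component | apply: leq_trans cardC (leq_pmull _ j_gt0)].
set d := #|K :&: C| - #|J :&: C|.
have defWC : #|J :&: (W :\: C)| + (j - d) <= #|K :&: (W :\: C)|.
  by move: defW; rewrite (cardsI_split J CW) (cardsI_split K CW) /d; lia.
have [|W'' [cW'' W''WC cardW'' defW'']] := IH (j - d) _ (W :\: C)
  (closedD cW (closed_component x)) (subset_trans (subsetDl W C) WV) defWC.
  by rewrite /d; lia.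
have CW'' : (C :|: W'') :\: C = W''.
  apply/setP => y; rewrite in_setD in_setU; case: (boolP (y \in C)) => //= yC.
  by apply/esym/negbTE; apply: contraTN yC => /(subsetP W''WC)/setDP[].
have CCW'' : C \subset C :|: W'' := subsetUl C W''.
exists (C :|: W''); split.
- exact: closedU (closed_component x) cW''.
- by rewrite subUset CW (subset_trans W''WC (subsetDl W C)).
- have jE : j * n0 = n0 + j.-1 * n0 by rewrite -mulSn prednK.
  have : (j - d) * n0 <= j.-1 * n0 by rewrite leq_mul2r /d; apply/orP; right; lia.
  by have := cardsU C W''; lia.
- by move: defW''; rewrite (cardsI_split J CCW'') (cardsI_split K CCW'') CW'' /d; lia.
Qed.

Lemma maxindep_setI_closed V S W : closed r W -> V \subset V0 ->
  maxindep e V S -> maxindep e (V :&: W) (S :&: W).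
Proof.
move=> cW VV0 /maxindepP[SV iS domS]; apply/maxindepP; split.
- exact: setSI.
- exact: indep_subset (subsetIl S W) iS.
- move=> x /setIP[xV xW]; rewrite in_setI xW andbT => xS.
  have [y yS exy] := domS x xV xS; exists y => //; rewrite in_setI yS -(cW x y) //.
  by rewrite /induced exy !(subsetP VV0) // (subsetP SV).
Qed.

Lemma maxindepU_closed V A B W : closed r W -> V \subset V0 ->
  maxindep e (V :&: W) A -> maxindep e (V :\: W) B -> maxindep e V (A :|: B).
Proof.
move=> cW VV0 /maxindepP[AVW iA domA] /maxindepP[BVW iB domB]; apply/maxindepP; split.
- by rewrite subUset (subset_trans AVW (subsetIl _ _)) (subset_trans BVW (subsetDl _ _)).
- apply: indepU iA iB _ => x y /(subsetP AVW)/setIP[xV xW] /(subsetP BVW)/setDP[yV yW].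
  exact: closed_no_edge cW (subsetP VV0 x xV) (subsetP VV0 y yV) xW yW.
- move=> x xV; rewrite in_setU negb_or => /andP[xA xB].
  have [xW|xW] := boolP (x \in W).
    have [|y yA exy] := domA x _ xA; first by rewrite in_setI xV.
    by exists y; rewrite // in_setU yA.
  have [|y yB exy] := domB x _ xB; first by rewrite in_setD xV xW.
  by exists y; rewrite // in_setU yB orbT.
Qed.

Lemma deficit_small_subset I J j :
  maxindep e (V0 :\: nbhd e I) J -> #|J| + j <= alpha e V0 ->
  exists I', [/\ I' \subset I, #|I'| <= j * n0 &
                imin e (V0 :\: nbhd e I') + j <= alpha e V0].
Proof.
move=> mJ defJ; have /maxindepP[JV0 _ _] := mJ.
have [K [KV0 iK cardK]] := alpha_attained V0.
have defV0 : #|J :&: V0| + j <= #|K :&: V0|.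
  by rewrite (setIidPl KV0) (setIidPl (subset_trans JV0 (subsetDl _ _))) cardK.
have closedV0 : closed r V0 by move=> x y /and3P[_ -> ->].
have [W [cW WV0 cardW defW]] := small_deficit_set closedV0 (subxx V0) defV0.
have [I' [I'I cardI' NE]] := nbhd_trace I W.
exists I'; split=> //; first exact: leq_trans cardI' cardW.
have [X mX] := maxindep_exists ((V0 :\: nbhd e I') :\: W).
have /maxindepP[/subsetP XV iX _] := mX.
have VWE : (V0 :\: nbhd e I') :&: W = (V0 :\: nbhd e I) :&: W.
  apply/setP => x; rewrite !in_setI !in_setD; case: (boolP (x \in W)) => xW; rewrite ?andbF //.
  by have := congr1 (fun A => x \in A) NE; rewrite !in_setI xW !andbT => ->.
have mJX : maxindep e (V0 :\: nbhd e I') ((J :&: W) :|: X).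
  apply: (maxindepU_closed cW (subsetDl _ _) _ mX).
  by rewrite VWE; apply: maxindep_setI_closed cW (subsetDl _ _) mJ.
have iKX : indep e ((K :&: W) :|: X).
  apply: indepU (indep_subset (subsetIl K W) iK) iX _ => x y /setIP[xK xW].
  move=> /XV/setDP[/setDP[yV0 _] yW].
  exact: closed_no_edge cW (subsetP KV0 x xK) yV0 xW yW.
have KWX : K :&: W :&: X = set0.
  apply/setP => x; rewrite !in_setI in_set0; case: (boolP (x \in X)) => [/XV/setDP[_]|];
  by rewrite ?andbF // => /negbTE->; rewrite andbF.
have KWXV0 : (K :&: W) :|: X \subset V0.
  by rewrite subUset (subset_trans (subsetIl K W) KV0); apply/subsetP => x /XV/setDP[/setDP[]].
have := leq_card_alpha KWXV0 iKX; rewrite cardsU KWX cards0 subn0.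
by have := imin_leq mJX; rewrite cardsU; lia.
Qed.

End Components.

(** * Graphs whose internal vertices have type 0 or 1 *)

Section PendantLeaves.
Hypothesis types01 : forall v : T, internal e v ->
  v \in type_set e 0 \/ v \in type_set e 1.

Local Notation U := (Uset e).
Local Notation G0 := (type_set e 0).
Local Notation G1 := (type_set e 1).

Lemma Uset_edge x y : e x y -> (x \in U) = (y \in U).
Proof.
suff UE a b : e a b -> a \in U -> b \in U.
  by move=> exy; apply/idP/idP; apply: UE; rewrite // sym_e.
rewrite !inE => eab /forallP Ua; apply/forallP => c; apply/forallP => d.
apply/implyP => /andP[/andP[bc bd] cd]; have /forallP/(_ d)/implyP := Ua c; apply.
by rewrite cd !(connect_trans (connect1 eab)).
Qed.

(* Only meaningful for a leaf, whose neighbour is unique by leaf_adjE. *)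
Definition parent l := odflt l [pick u | e l u].

Lemma leaf_adjE l : leaf e l -> forall u, e l u = (u == parent l).
Proof.
case/andP => lU /cards1P[p Np].
have adjE u : e l u = (u == p).
  rewrite -in_set1 -Np inE; case: (boolP (e l u)) => //= elu.
  by rewrite -(Uset_edge elu).
suff -> : parent l = p by [].
by rewrite /parent; case: pickP => [u|/(_ p)]; rewrite adjE ?eqxx // => /eqP.
Qed.

Lemma parent_not_leaf l : leaf e l -> ~~ leaf e (parent l).
Proof.
move=> ll; set p := parent l; apply/negP => lp.
have lpE : parent p = l by apply/esym/eqP; rewrite -leaf_adjE // sym_e leaf_adjE.
have closed_lp : closed e [set l; p].
  apply: intro_closed; first exact: sym_connect_sym.
  move=> x y exy /set2P[]xE; rewrite xE in exy; rewrite !inE.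
    by rewrite leaf_adjE // in exy; rewrite exy orbT.
  by rewrite leaf_adjE // lpE in exy; rewrite exy.
have /andP[lU _] := ll; case/negP: lU; rewrite inE; apply/forallP => a; apply/forallP => b.
apply/implyP => /andP[/andP[la lb]].
have := closed_connect closed_lp la; have := closed_connect closed_lp lb.
rewrite !set21 => /esym/set2P[]-> /esym/set2P[]->; rewrite ?eqxx //= => _.
  by rewrite sym_e leaf_adjE.
by rewrite leaf_adjE.
Qed.

Lemma in_G0 v : (v \in G0) = internal e v && (nleaves e v == 0) || (v \in U).
Proof. by rewrite inE. Qed.

Lemma in_G1 v : (v \in G1) = internal e v && (nleaves e v == 1).
Proof. by rewrite inE orbF. Qed.

Lemma notin_G0 v : (v \notin G0) = (v \in G1) || leaf e v.
Proof.
rewrite in_G0 in_G1 /leaf /internal; have [vU|vU] := boolP (v \in U); first by rewrite orbT.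
have [d1|d1] := eqVneq (degGU e v) 1; first by rewrite orbT.
have vint : internal e v by rewrite /internal vU d1.
by case: (types01 vint); rewrite ?in_G0 ?in_G1 vint ?(negbTE vU) /= ?orbF => /eqP->.
Qed.

Lemma leaf_notin_G1 l : leaf e l -> l \notin G1.
Proof. by case/andP => lU d1; rewrite in_G1 /internal lU d1. Qed.

Lemma G1_notin_G0 v : v \in G1 -> v \notin G0.
Proof. by move=> vG1; rewrite notin_G0 vG1. Qed.

Lemma leaf_notin_G0 l : leaf e l -> l \notin G0.
Proof. by move=> ll; rewrite notin_G0 ll orbT. Qed.

Lemma parent_in_G1 l : leaf e l -> parent l \in G1.
Proof.
move=> ll; have /andP[lU _] := ll.
have pU : parent l \notin U by rewrite -(Uset_edge (_ : e l (parent l))) ?leaf_adjE.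
suff : parent l \notin G0 by rewrite notin_G0 (negbTE (parent_not_leaf ll)) orbF.
rewrite in_G0 (negbTE pU) orbF negb_and -lt0n; apply/orP; right.
by apply/card_gt0P; exists l; rewrite inE sym_e leaf_adjE ?eqxx.
Qed.

Lemma leaf_adj_notin_G0 l x : leaf e l -> e l x -> x \notin G0.
Proof. by move=> ll; rewrite leaf_adjE // notin_G0 => /eqP->; rewrite parent_in_G1. Qed.

Lemma leaves_of_G1 v : v \in G1 ->
  exists l, leaf e l /\ forall u, leaf e u -> (parent u == v) = (u == l).
Proof.
rewrite in_G1 => /andP[_ /cards1P[l Ll]].
have : l \in [set u | e v u & leaf e u] by rewrite Ll set11.
rewrite inE => /andP[_ ll]; exists l; split=> // u lu.
by rewrite -[u == l]in_set1 -Ll inE lu andbT sym_e leaf_adjE // eq_sym.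
Qed.

Lemma parent_inj : {in leaf e &, injective parent}.
Proof.
move=> x y lx ly pxy; have [l [_ lE]] := leaves_of_G1 (parent_in_G1 lx).
by have := lE x lx; have := lE y ly; rewrite -pxy !eqxx => /esym/eqP-> /esym/eqP->.
Qed.

Definition anchor v := if leaf e v then parent v else v.

Lemma anchor_in_G1 v : v \notin G0 -> anchor v \in G1.
Proof. by rewrite notin_G0 /anchor; case: ifP => [lv _|_]; [apply: parent_in_G1|rewrite orbF]. Qed.

Lemma anchor_inj S : indep e S -> {in S :\: G0 &, injective anchor}.
Proof.
move=> /indepP iS x y /setDP[xS _] /setDP[yS _]; rewrite /anchor.
case: ifP => lx; case: ifP => ly // pxy.
- exact: parent_inj.
- by have := iS x y xS yS; rewrite leaf_adjE // pxy eqxx.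
- by have := iS y x yS xS; rewrite leaf_adjE // pxy eqxx.
Qed.

Lemma card_setD_G0_indep S : indep e S -> #|S :\: G0| <= #|G1|.
Proof.
move=> iS; rewrite -(card_in_imset (anchor_inj iS)); apply/subset_leq_card/subsetP.
by move=> _ /imsetP[x /setDP[_ xG0] ->]; apply: anchor_in_G1.
Qed.

Lemma card_setD_G0_maxindep S : maxindep e setT S -> #|S :\: G0| = #|G1|.
Proof.
case/maxindepP => _ iS domS; apply/eqP; rewrite eqn_leq card_setD_G0_indep //=.
rewrite -(card_in_imset (anchor_inj iS)); apply/subset_leq_card/subsetP => v vG1.
have [vS|vS] := boolP (v \in S).
  apply/imsetP; exists v; first by rewrite in_setD vS notin_G0 vG1.
  by rewrite /anchor; case: ifP => // lv; case/negP: (leaf_notin_G1 lv).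
have [l [ll lE]] := leaves_of_G1 vG1.
have plv : parent l = v by apply/eqP; rewrite lE.
have lS : l \in S.
  apply: contraT => lS; have [y yS] := domS l (in_setT l) lS.
  by rewrite leaf_adjE // plv => /eqP yv; rewrite -yv yS in vS.
by apply/imsetP; exists l; rewrite /anchor ?in_setD ?lS ?notin_G0 ll ?plv ?orbT.
Qed.

Lemma maxindep_trace_G0 S :
  maxindep e setT S -> maxindep e (G0 :\: nbhd e (S :&: G1)) (S :&: G0).
Proof.
case/maxindepP => _ iS domS; apply/maxindepP; split.
- apply/subsetP => x /setIP[xS xG0]; rewrite in_setD xG0 andbT inE.
  by apply/exists_inP => -[y /setIP[yS _]]; apply/negP; move/indepP: iS; apply.
- exact: indep_subset (subsetIl S G0) iS.
- move=> x /setDP[xG0 xN]; rewrite in_setI xG0 andbT => xS.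
  have [y yS exy] := domS x (in_setT x) xS.
  have [yG0|] := boolP (y \in G0); first by exists y; rewrite ?in_setI ?yS.
  rewrite notin_G0 => /orP[yG1|ly].
    by case/negP: xN; rewrite inE; apply/exists_inP; exists y; rewrite ?in_setI ?yS // sym_e.
  by rewrite sym_e in exy; rewrite (negbTE (leaf_adj_notin_G0 ly exy)) in xG0.
Qed.

Section Extension.
Variables I J : {set T}.
Hypotheses (IG1 : I \subset G1) (iI : indep e I) (mJ : maxindep e (G0 :\: nbhd e I) J).

Definition extension := I :|: J :|: [set l | leaf e l & parent l \notin I].

Lemma extension_G0 : extension :&: G0 = J.
Proof.
have /maxindepP[/subsetP J_sub _ _] := mJ.
apply/setP => x; rewrite in_setI !in_setU.
have [xJ|xJ] := boolP (x \in J); first by have /setDP[-> _] := J_sub x xJ; rewrite orbT.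
rewrite orbF andbC; have [xG0|] //= := boolP (x \in G0).
apply/negP => /orP[/(subsetP IG1)/G1_notin_G0|]; first by rewrite xG0.
by rewrite inE => /andP[/leaf_notin_G0]; rewrite xG0.
Qed.

Lemma extension_indep : indep e extension.
Proof.
have /maxindepP[/subsetP J_sub iJ _] := mJ.
apply: indepU; first apply: indepU => // x y xI /J_sub/setDP[_].
- by apply: contraNN => exy; rewrite inE; apply/exists_inP; exists x.
- apply/indepP => l l'; rewrite !inE => /andP[ll _] /andP[ll' _].
  by rewrite leaf_adjE //; apply: contraTneq ll' => ->; apply: parent_not_leaf.
- move=> x l /setUP[xI|xJ]; rewrite inE sym_e => /andP[ll lI]; rewrite leaf_adjE //.
    by apply: contraNN lI => /eqP<-.
  have /setDP[xG0 _] := J_sub x xJ.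
  by apply: contraTN xG0 => /eqP->; apply: G1_notin_G0; apply: parent_in_G1.
Qed.

Lemma extension_maxindep : maxindep e setT extension.
Proof.
have /maxindepP[_ _ domJ] := mJ.
apply/maxindepP; split=> [||x _]; [exact: subsetT | exact: extension_indep |].
rewrite !in_setU inE => /norP[/norP[xI xJ] xL].
have [xG0|] := boolP (x \in G0).
  have [xN|xN] := boolP (x \in nbhd e I).
    move: xN; rewrite inE => /exists_inP[y yI eyx].
    by exists y; rewrite 1?sym_e // !in_setU yI.
  have [|y yJ exy] := domJ x _ xJ; first by rewrite in_setD xN.
  by exists y; rewrite // !in_setU yJ orbT.
rewrite notin_G0 => /orP[xG1|lx].
  have [l [ll lE]] := leaves_of_G1 xG1.
  have plx : parent l = x by apply/eqP; rewrite lE.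
  exists l; last by rewrite sym_e leaf_adjE // plx.
  by rewrite !in_setU inE ll plx xI orbT.
exists (parent x); last by rewrite leaf_adjE.
by move: xL; rewrite lx /= negbK => pI; rewrite !in_setU pI.
Qed.

End Extension.

Lemma alpha_setT : alpha e setT = #|G1| + alpha e G0.
Proof.
apply/eqP; rewrite eqn_leq; apply/andP; split.
  have [S [_ iS <-]] := alpha_attained setT.
  rewrite -(cardsID G0 S) addnC leq_add ?card_setD_G0_indep //.
  exact: leq_card_alpha (subsetIr S G0) (indep_subset (subsetIl S G0) iS).
have [K [KG0 iK cardK]] := alpha_attained G0.
have mK : maxindep e (G0 :\: nbhd e set0) K by rewrite nbhd0 setD0; apply: maximum_maxindep.
have mS := extension_maxindep indep0 mK.
have /maxindepP[_ iS _] := mS.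
rewrite -cardK -{1}(extension_G0 (sub0set G1) mK) -(card_setD_G0_maxindep mS) addnC cardsID.
exact: leq_card_alpha (subsetT _) iS.
Qed.

Lemma mu_alpha_setT_leq k : mu_alpha e setT <= k <->
  (forall I J, I \subset G1 -> indep e I -> maxindep e (G0 :\: nbhd e I) J ->
     alpha e G0 <= #|J| + k).
Proof.
rewrite /mu_alpha leq_subLR alpha_setT; split=> [imin_ge I J IG1 iI mJ | ext_ge].
  have mS := extension_maxindep iI mJ.
  move: (imin_leq mS) imin_ge.
  by rewrite -(cardsID G0) extension_G0 // card_setD_G0_maxindep //; lia.
have [S mS <-] := imin_attained setT; have /maxindepP[_ iS _] := mS.
have := ext_ge _ _ (subsetIr S G1) (indep_subset (subsetIl S G1) iS) (maxindep_trace_G0 mS).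
by rewrite -(cardsID G0 S) card_setD_G0_maxindep //; lia.
Qed.

Theorem mu_alpha_leq_iff k : mu_alpha e setT <= k <->
  mu_alpha e G0 <= k /\
  (forall I, I \subset G1 -> indep e I -> #|I| <= k.+1 * max_comp e G0 ->
     alpha e G0 - imin e (G0 :\: nbhd e I) <= k).
Proof.
rewrite mu_alpha_setT_leq; split=> [ext_ge | [muG0 small_ge] I J IG1 iI mJ].
  split=> [|I IG1 iI _].
    rewrite /mu_alpha; have [J mJ <-] := imin_attained G0; rewrite leq_subLR.
    by apply: ext_ge (sub0set _) indep0 _; rewrite nbhd0 setD0.
  by have [J mJ <-] := imin_attained (G0 :\: nbhd e I); rewrite leq_subLR; apply: ext_ge mJ.
rewrite leqNgt; apply/negP => lt; have defJ : #|J| + k.+1 <= alpha e G0 by lia.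
have [I' [I'I cardI' iminI']] := deficit_small_subset mJ defJ.
by have := small_ge I' (subset_trans I'I IG1) (indep_subset I'I iI) cardI'; lia.
Qed.

End PendantLeaves.
End Graph.

Theorem corollary10 (T : finType) (e : rel T)
  (esym : symmetric e) (eirr : irreflexive e)
  (Htypes : forall v : T, internal e v ->
              v \in type_set e 0 \/ v \in type_set e 1) :
  let G0 := type_set e 0 in
  let G1 := type_set e 1 in
  let n0 := max_comp e G0 in
  (well_covered e [set: T] <->
     well_covered e G0 /\
     (forall I : {set T}, I \subset G1 -> indep e I -> #|I| <= n0 ->
        imin e (G0 :\: nbhd e I) = alpha e G0))
  /\
  (mu_alpha e [set: T] <= 1 <->
     mu_alpha e G0 <= 1 /\
     (forall I : {set T}, I \subset G1 -> indep e I -> #|I| <= 2 * n0 ->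
        alpha e G0 - imin e (G0 :\: nbhd e I) <= 1)).
Proof.
move=> G0 G1 n0; rewrite {}/n0 {}/G1 {}/G0; have iffk k := mu_alpha_leq_iff esym eirr Htypes k.
split; last exact: iffk 1.
have imin_le I : imin e (type_set e 0 :\: nbhd e I) <= alpha e (type_set e 0).
  exact: leq_trans (imin_le_alpha _ _) (alphaS _ (subsetDl _ _)).
split=> [/eqP | [muG0 small]].
  rewrite -leqn0 => /(iffk 0)[muG0 small].
  split=> [|I IG1 iI cardI]; first by apply/eqP; rewrite -leqn0.
  by have := small I IG1 iI; rewrite mul1n => /(_ cardI); have := imin_le I; lia.
apply/eqP; rewrite -leqn0; apply/(iffk 0); split=> [|I IG1 iI cardI]; first by rewrite muG0.
by rewrite mul1n in cardI; rewrite small ?subnn.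
Qed.
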